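(* Let $n\ge 2$ be an integer and let $\mathcal{P}(\lambda)=(8n^3-12n^2+2n+1)\lambda^4+(-64n^6+192n^5-192n^4+64n^3+4n^2+2n-4)\lambda^3+(-96n^5+224n^4-168n^3+52n^2-18n+6)\lambda^2+(32n^5-112n^4+128n^3-68n^2+22n-4)\lambda+16n^4-32n^3+24n^2-8n+1.$ Then $\mathcal{P}(\lambda)$ has a unique root larger than $(2n-1)^2$, and all other roots of $\mathcal{P}$ are less than $1$. *)

From mathcomp Require Import all_boot all_order all_algebra.
Set Implicit Arguments. Unset Strict Implicit. Unset Printing Implicit Defensive.
Import Order.TTheory GRing.Theory Num.Theory.
Local Open Scope ring_scope.

Definition Ppoly (R : comRingType) (n : nat) : {poly R} :=
  let m : R := n%:R in
  (8 * m ^+ 3 - 12 * m ^+ 2 + 2 * m + 1)%:P * 'X^4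
  + (- 64 * m ^+ 6 + 192 * m ^+ 5 - 192 * m ^+ 4 + 64 * m ^+ 3
     + 4 * m ^+ 2 + 2 * m - 4)%:P * 'X^3
  + (- 96 * m ^+ 5 + 224 * m ^+ 4 - 168 * m ^+ 3 + 52 * m ^+ 2
     - 18 * m + 6)%:P * 'X^2
  + (32 * m ^+ 5 - 112 * m ^+ 4 + 128 * m ^+ 3 - 68 * m ^+ 2
     + 22 * m - 4)%:P * 'X
  + (16 * m ^+ 4 - 32 * m ^+ 3 + 24 * m ^+ 2 - 8 * m + 1)%:P.

From mathcomp Require Import all_boot all_order all_algebra.
From mathcomp Require Import ring lra.
From mathcomp Require Import polyrcf.
Set Implicit Arguments. Unset Strict Implicit. Unset Printing Implicit Defensive.
Import Order.TTheory GRing.Theory Num.Theory.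
Local Open Scope ring_scope.

(* P has degree 4 and a positive leading coefficient, so it is positive at both
   ends of the real line.  With m = n, its values at -1/(m-1), 0, 1 and (2m-1)^2
   factor into powers of m, m-1, 2m-1, 2m-3 and 4(m-1)^2+1, with signs
   -, +, -, -.  The four sign changes give roots in (-oo, -1/(m-1)),
   (-1/(m-1), 0), (0, 1) and ((2m-1)^2, +oo), and a quartic has no others. *)

Section Quartic.
Variables (R : comNzRingType) (a0 a1 a2 a3 a4 : R).

Let quartic : {poly R} :=
  a4%:P * 'X^4 + a3%:P * 'X^3 + a2%:P * 'X^2 + a1%:P * 'X + a0%:P.

Lemma quartic_Poly : quartic = Poly [:: a0; a1; a2; a3; a4].
Proof. by rewrite /quartic /= !cons_poly_def mul0r add0r; ring. Qed.

Lemma horner_quartic x :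
  quartic.[x] = a4 * x ^+ 4 + a3 * x ^+ 3 + a2 * x ^+ 2 + a1 * x + a0.
Proof. by rewrite /quartic !hornerE. Qed.

Hypothesis a4_neq0 : a4 != 0.

Lemma size_quartic : size quartic = 5%N.
Proof. by rewrite quartic_Poly (PolyK (c := 0)) /=. Qed.

Lemma lead_coef_quartic : lead_coef quartic = a4.
Proof. by rewrite lead_coefE size_quartic quartic_Poly coef_Poly. Qed.

End Quartic.

Lemma root_in_max_roots (R : idomainType) (p : {poly R}) (rs : seq R) :
  p != 0 -> (size p <= (size rs).+1)%N -> all (root p) rs -> uniq rs ->
  forall x, root p x -> x \in rs.
Proof.
move=> p_neq0 size_p rs_roots rs_uniq x px; apply: contraT => x_notin_rs.
have xrs_roots : all (root p) (x :: rs) by rewrite /= px.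
have xrs_uniq : uniq (x :: rs) by rewrite /= x_notin_rs.
by have := max_poly_roots p_neq0 xrs_roots xrs_uniq; rewrite ltnNge size_p.
Qed.

Section RealRoots.
Variable R : rcfType.
Implicit Types (p : {poly R}) (a : R).

Lemma exists_root_gt p a :
  0 < lead_coef p -> p.[a] < 0 -> exists2 x, a < x & root p x.
Proof.
move=> lc_gt0 pa_lt0; have [b pb_ge] := poly_pinfty_gt_lc lc_gt0.
set c := Num.max a b.
have pc_gt0 : 0 < p.[c].
  by apply: lt_le_trans lc_gt0 (pb_ge _ _); rewrite le_max lexx orbT.
have [x] : {x | x \in `]a, c[ & root p x}.
  by apply: poly_ivtoo; rewrite ?le_max ?lexx ?nmulr_rlt0.
by rewrite in_itv /= => /andP[ax _]; exists x.
Qed.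

Lemma exists_root_lt p a : 0 < lead_coef p -> ~~ odd (size p).-1 ->
  p.[a] < 0 -> exists2 x, x < a & root p x.
Proof.
move=> lc_gt0 even_deg pa_lt0.
have size_NX : (1 < size (- 'X : {poly R}))%N by rewrite size_polyN size_polyX.
have lc_comp : lead_coef (p \Po - 'X) = lead_coef p.
  by rewrite lead_coef_comp // lead_coefN lead_coefX -signr_odd (negPf even_deg) mulr1.
have [x ax] : exists2 x, - a < x & root (p \Po - 'X) x.
  by apply: exists_root_gt; rewrite ?lc_comp // horner_comp !hornerE opprK.
by rewrite /root horner_comp !hornerE => px; exists (- x); rewrite // ltrNl.
Qed.

End RealRoots.

Lemma roots_of_sign_pattern (R : rcfType) (p : {poly R}) (a b c d : R) :
  size p = 5%N -> 0 < lead_coef p -> a < b -> b < c -> c < d ->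
  p.[a] < 0 -> 0 < p.[b] -> p.[c] < 0 -> p.[d] < 0 ->
  exists r, [/\ root p r, d < r,
                (forall x, root p x -> d < x -> x = r)
              & (forall x, root p x -> x != r -> x < c)].
Proof.
move=> size_p lc_gt0 ab bc cd pa_lt0 pb_gt0 pc_lt0 pd_lt0.
have even_deg : ~~ odd (size p).-1 by rewrite size_p.
have [r1 r1a root_r1] := exists_root_lt lc_gt0 even_deg pa_lt0.
have [r2] : {x | x \in `]a, b[ & root p x}.
  by apply: poly_ivtoo; rewrite ?ltW // nmulr_rlt0.
rewrite in_itv /= => /andP[ar2 r2b] root_r2.
have [r3] : {x | x \in `]b, c[ & root p x}.
  by apply: poly_ivtoo; rewrite ?ltW // pmulr_rlt0.
rewrite in_itv /= => /andP[br3 r3c] root_r3.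
have [r4 dr4 root_r4] := exists_root_gt lc_gt0 pd_lt0.
have r12 : r1 < r2 := lt_trans r1a ar2.
have r23 : r2 < r3 := lt_trans r2b br3.
have r34 : r3 < r4 := lt_trans r3c (lt_trans cd dr4).
have roots_p : forall x, root p x -> x \in [:: r1; r2; r3; r4].
  apply: root_in_max_roots; rewrite ?size_p //.
  - by rewrite -size_poly_gt0 size_p.
  - by rewrite /= root_r1 root_r2 root_r3 root_r4.
  - by apply: lt_sorted_uniq; rewrite /= r12 r23 r34.
have other_roots_lt : forall x, root p x -> x = r4 \/ x < c.
  move=> x /roots_p; rewrite !inE => /or4P[] /eqP ->; [right|right|right|by left].
  - exact: lt_trans r12 (lt_trans r23 r3c).
  - exact: lt_trans r23 r3c.
  - exact: r3c.
exists r4; split => // x /other_roots_lt[->|x_lt_c] //; last by rewrite eqxx.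
by move=> /(lt_trans cd)/(lt_trans x_lt_c); rewrite ltxx.
Qed.

Section PpolyValues.
Variables (R : comNzRingType) (n : nat).
Local Notation m := (n%:R : R).
Local Notation P := (Ppoly R n).

Lemma horner_Ppoly0 : P.[0] = (2 * m - 1) ^+ 4.
Proof. by rewrite /Ppoly horner_quartic; ring. Qed.

Lemma horner_Ppoly1 : P.[1] = - (64 * m ^+ 4 * (m - 1) ^+ 2).
Proof. by rewrite /Ppoly horner_quartic; ring. Qed.

Lemma horner_Ppoly_sqr :
  P.[(2 * m - 1) ^+ 2]
  = - (128 * m ^+ 4 * (m - 1) ^+ 3 * (2 * m - 1) ^+ 3 * (4 * (m - 1) ^+ 2 + 1)).
Proof. by rewrite /Ppoly horner_quartic; ring. Qed.

End PpolyValues.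

Lemma horner_Ppoly_inv (R : fieldType) (n : nat) (m := n%:R : R) : m != 1 ->
  (m - 1) ^+ 4 * (Ppoly R n).[- (m - 1)^-1]
  = - (m ^+ 4 * (2 * m - 3) ^+ 2 * (4 * (m - 1) ^+ 2 + 1)).
Proof. by move=> m_neq1; rewrite /Ppoly horner_quartic; field; rewrite subr_eq0. Qed.

Section PpolySigns.
Context {R : realFieldType} {n : nat}.
Hypothesis n_ge2 : (2 <= n)%N.
Local Notation m := (n%:R : R).
Local Notation P := (Ppoly R n).

Let m_ge2 : 2 <= m. Proof. by rewrite (ler_nat R 2). Qed.

Let lead_gt0 : 0 < 8 * m ^+ 3 - 12 * m ^+ 2 + 2 * m + 1.
Proof.
have -> : 8 * m ^+ 3 - 12 * m ^+ 2 + 2 * m + 1 = (2 * m - 1) * ((2 * m - 1) ^+ 2 - 2).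
  by ring.
by have m2 := m_ge2; apply: mulr_gt0; nra.
Qed.

Lemma size_Ppoly : size P = 5%N.
Proof. by rewrite /Ppoly size_quartic ?gt_eqF. Qed.

Lemma lead_coef_Ppoly_gt0 : 0 < lead_coef P.
Proof. by rewrite /Ppoly lead_coef_quartic ?gt_eqF. Qed.

Lemma Ppoly0_gt0 : 0 < P.[0].
Proof. by have m2 := m_ge2; rewrite horner_Ppoly0 exprn_gt0 //; lra. Qed.

Lemma Ppoly1_lt0 : P.[1] < 0.
Proof. by have m2 := m_ge2; rewrite horner_Ppoly1 oppr_lt0 !mulr_gt0 //; lra. Qed.

Lemma Ppoly_sqr_lt0 : P.[(2 * m - 1) ^+ 2] < 0.
Proof. by have m2 := m_ge2; rewrite horner_Ppoly_sqr oppr_lt0 !mulr_gt0 //; nra. Qed.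

Lemma Ppoly_inv_lt0 : P.[- (m - 1)^-1] < 0.
Proof.
have m2 := m_ge2; have m1_gt0 : 0 < m - 1 by lra.
rewrite -(pmulr_rlt0 _ (exprn_gt0 4 m1_gt0)) horner_Ppoly_inv.
  by rewrite oppr_lt0 !mulr_gt0 //; nra.
by rewrite -subr_eq0 gt_eqF.
Qed.

End PpolySigns.

Theorem lemma2p1 (R : rcfType) (n : nat) (hn : (2 <= n)%N) :
  exists r : R,
    [/\ root (Ppoly R n) r,
        ((2 * n - 1) ^ 2)%:R < r,
        (forall x : R, root (Ppoly R n) x -> ((2 * n - 1) ^ 2)%:R < x -> x = r)
      & (forall x : R, root (Ppoly R n) x -> x != r -> x < 1)].
Proof.
set m : R := n%:R.
have -> : ((2 * n - 1) ^ 2)%:R = (2 * m - 1) ^+ 2 :> R.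
  by rewrite natrX natrB ?natrM // muln_gt0 (ltnW hn).
have m_ge2 : 2 <= m by rewrite (ler_nat R 2).
apply: (roots_of_sign_pattern (size_Ppoly hn) (lead_coef_Ppoly_gt0 hn) _ _ _
         (Ppoly_inv_lt0 hn) (Ppoly0_gt0 hn) (Ppoly1_lt0 hn) (Ppoly_sqr_lt0 hn)).
- by rewrite oppr_lt0 invr_gt0; lra.
- exact: ltr01.
- by nra.
Qed.
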